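(* Let $J$ be a bounded half-line Jacobi matrix with $0<\inf_na_n\le\sup_na_n<\infty$, let $\mathcal R$ be the set of its right limits, and let $K\subset\mathbb{R}$ be compact. Suppose that for each $x_0\in K$ and $J^{(r)}\in\mathcal R$ there is a (complex) solution $u^+=u^+(J^{(r)},x_0)$, $n\in\mathbb{Z}$, of $a^{(r)}_nu_{n+1}+b^{(r)}_nu_n+a^{(r)}_{n-1}u_{n-1}=x_0u_n$ such that (i) $\sup_{n\in\mathbb{Z},\,x_0\in K,\,J^{(r)}\in\mathcal R}|u^+_n(J^{(r)},x_0)|<\infty$, and (ii) $\inf_{x_0\in K,\,J^{(r)}\in\mathcal R}\ a_0^{(r)}\big|u_1^+\overline{u_0^+}-\overline{u_1^+}u_0^+\big|>0$. Then the Nevai condition holds for $J$ uniformly on $K$, i.e. $\sup_{x_0\in K}\ p_n(x_0)^2/K_n(x_0,x_0)\to0$ as $n\to\infty$ (and hence the Nevai condition holds at every $x_0\in K$).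
   Context: A half-line Jacobi matrix $J$ with parameters $\{a_n,b_n\}_{n\ge1}$ ($a_n>0$) acts on $\ell^2(\{1,2,\dots\})$ by $J_{nn}=b_n$, $J_{n,n+1}=J_{n+1,n}=a_n$; $\rho$ is its spectral measure for $\delta_1$, $p_n$ ($n\ge0$) its orthonormal polynomials ($p_{-1}=0$, $p_0=1$, $xp_n=a_{n+1}p_{n+1}+b_{n+1}p_n+a_np_{n-1}$), and $K_n(x,y)=\sum_{j=0}^np_j(x)p_j(y)$. A two-sided sequence $\{a^{(r)}_n,b^{(r)}_n\}_{n\in\mathbb{Z}}$ is a right limit of $J$ if there are $m_j\to\infty$ with $a_{m_j+n}\to a^{(r)}_n$ and $b_{m_j+n}\to b^{(r)}_n$ for every $n\in\mathbb{Z}$; the corresponding two-sided Jacobi matrix is denoted $J^{(r)}$. The Nevai condition at $x_0$ means $K_n(x,x_0)^2\,d\rho(x)/K_n(x_0,x_0)\to\delta_{x_0}$ weakly. *)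

From Stdlib Require Import Reals ZArith.
Open Scope R_scope.

Definition Cx := (R * R)%type.
Definition Cadd (z w : Cx) : Cx := (fst z + fst w, snd z + snd w).
Definition Csub (z w : Cx) : Cx := (fst z - fst w, snd z - snd w).
Definition Cmul (z w : Cx) : Cx :=
  (fst z * fst w - snd z * snd w, fst z * snd w + snd z * fst w).
Definition Cconj (z : Cx) : Cx := (fst z, - snd z).
Definition Cscal (r : R) (z : Cx) : Cx := (r * fst z, r * snd z).
Definition Cmod (z : Cx) : R := sqrt (fst z ^ 2 + snd z ^ 2).

(* Half-line Jacobi parameters: a, b : nat -> R, where a n, b n are a_n, b_n
   for n >= 1 (the value at index 0 is irrelevant). *)

(* Access a half-line sequence at an integer index (junk value at k <= 0). *)
Definition atZ (s : nat -> R) (k : Z) : R := s (Z.to_nat k).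

Definition is_right_limit (a b : nat -> R) (ar br : Z -> R) : Prop :=
  exists m : nat -> nat,
    (forall M : nat, exists j0 : nat, forall j : nat, (j0 <= j)%nat -> (M <= m j)%nat) /\
    (forall n : Z,
        Un_cv (fun j => atZ a (Z.of_nat (m j) + n)%Z) (ar n) /\
        Un_cv (fun j => atZ b (Z.of_nat (m j) + n)%Z) (br n)).

Definition solves (ar br : Z -> R) (x0 : R) (u : Z -> Cx) : Prop :=
  forall n : Z,
    Cadd (Cadd (Cscal (ar n) (u (n + 1)%Z)) (Cscal (br n) (u n)))
         (Cscal (ar (n - 1)%Z) (u (n - 1)%Z)) = Cscal x0 (u n).

(* opoly_pair a b x n = (p_n(x), p_{n+1}(x)), from p_{-1} = 0, p_0 = 1,
   x p_n = a_{n+1} p_{n+1} + b_{n+1} p_n + a_n p_{n-1}. *)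
Fixpoint opoly_pair (a b : nat -> R) (x : R) (n : nat) : R * R :=
  match n with
  | O => (1, (x - b 1%nat) / a 1%nat)
  | S k => let pq := opoly_pair a b x k in
           (snd pq, ((x - b (k + 2)%nat) * snd pq - a (k + 1)%nat * fst pq) / a (k + 2)%nat)
  end.

Definition opoly (a b : nat -> R) (n : nat) (x : R) : R := fst (opoly_pair a b x n).

Definition CDkernel (a b : nat -> R) (n : nat) (x : R) : R :=
  sum_f_R0 (fun j => opoly a b j x ^ 2) n.

From Stdlib Require Import Reals ZArith.
From Stdlib Require Import Lra Lia Psatz Classical ClassicalEpsilon.
From Stdlib Require Cantor.
Open Scope R_scope.

(* If sup_{x in K} p_n(x)^2 / K_n(x,x) does not
   tend to 0, there are n_j -> oo and x_j in K where it stays above eps.  The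
   normalized profiles k |-> p_{n_j+k}(x_j) / K_{n_j}(x_j,x_j)^{1/2} (k <= 0) are
   bounded by 1 and have l^2 norm at most 1.  A diagonal extraction yields a
   subsequence along which x_j -> x0 in K, the coefficients shifted by n_j + 1
   converge to a right limit (ar, br), and the profiles converge pointwise to
   some v; then v solves the right-limit recurrence on the left half-line, is
   square summable there, and v_0^2 >= eps.  On the other hand the real and
   imaginary parts of u^+ are bounded solutions with nonzero Wronskian, and a
   bounded solution has zero Wronskian with any solution square summable at
   -oo (the Wronskian is constant there but dominated by a summable sequence);
   hence v_0 = 0, a contradiction. *)

Definition strict_incr (phi : nat -> nat) : Prop := forall n, (phi n < phi (S n))%nat.

Lemma strict_incr_lt phi : strict_incr phi -> forall m n, (m < n)%nat -> (phi m < phi n)%nat.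
Proof. intros H m n Hmn; induction Hmn as [|n _ IH]; [apply H|specialize (H n); lia]. Qed.

Lemma strict_incr_ge phi : strict_incr phi -> forall n, (n <= phi n)%nat.
Proof. intros H n; induction n; [lia|specialize (H n); lia]. Qed.

Lemma strict_incr_comp f g : strict_incr f -> strict_incr g -> strict_incr (fun n => f (g n)).
Proof. intros Hf Hg n; apply strict_incr_lt; auto. Qed.

Lemma cv_const c : Un_cv (fun _ => c) c.
Proof. intros eps He; exists 0%nat; intros; unfold Rdist; rewrite Rminus_diag, Rabs_R0; lra. Qed.

Lemma cv_le_eventually u l c N : Un_cv u l -> (forall n, (N <= n)%nat -> u n <= c) -> l <= c.
Proof.
  intros Hu HN. apply (Rle_cv_lim (Un := fun n => u (n + N)%nat) (Vn := fun _ => c)).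
  - intros n; apply HN; lia.
  - now apply CV_shift'.
  - apply cv_const.
Qed.

Lemma cv_abs_le u l c : Un_cv u l -> (forall n, Rabs (u n) <= c) -> Rabs l <= c.
Proof. intros Hu Hc. apply (cv_le_eventually _ _ _ 0 (cv_cvabs _ _ Hu)); auto. Qed.

Lemma cv_unique_eventually u w l1 l2 N :
  Un_cv u l1 -> Un_cv w l2 -> (forall n, (N <= n)%nat -> u n = w n) -> l1 = l2.
Proof.
  intros Hu Hw E. apply (UL_sequence (fun n => u (n + N)%nat)); [now apply CV_shift'|].
  intros eps He. destruct (CV_shift' w N l2 Hw eps He) as [N1 HN1].
  exists N1; intros n Hn. rewrite E by lia. now apply HN1.
Qed.

Lemma cv_sq u l : Un_cv u l -> Un_cv (fun n => u n ^ 2) (l ^ 2).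
Proof.
  intros H. change (Un_cv (fun n => u n * (u n * 1)) (l * (l * 1))).
  apply CV_mult; [exact H|]. apply (CV_mult _ _ _ _ H (cv_const 1)).
Qed.

Lemma cv_sum (G : nat -> nat -> R) (l : nat -> R) L : (forall k, Un_cv (G k) (l k)) ->
  Un_cv (fun j => sum_f_R0 (fun k => G k j) L) (sum_f_R0 l L).
Proof. intros H; induction L; simpl; [apply H|apply CV_plus; auto]. Qed.

Lemma bounded_subseq_cv (u : nat -> R) (M : R) : (forall n, Rabs (u n) <= M) ->
  exists phi, strict_incr phi /\ exists l, Un_cv (fun n => u (phi n)) l.
Proof.
  intros HM.
  destruct (Bolzano_Weierstrass u (fun c => -M <= c <= M) (compact_P3 _ _)) as [l Hl].
  { intros n; specialize (HM n); unfold Rabs in HM; destruct (Rcase_abs (u n)); lra. }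
  assert (Hclose : forall N k : nat, exists p, (N <= p)%nat /\ Rabs (u p - l) < / INR (S k)).
  { intros N k. assert (Hk : 0 < / INR (S k)) by (apply Rinv_0_lt_compat, lt_0_INR; lia).
    destruct (Hl (disc l (mkposreal _ Hk)) N) as [p Hp]; [now exists (mkposreal _ Hk)|].
    now exists p. }
  destruct (choice (fun Nk p => (fst Nk <= p)%nat /\ Rabs (u p - l) < / INR (S (snd Nk))))
    as [pick Hpick]; [intros [N k]; apply Hclose|].
  pose (phi := fix phi k := match k with
                            | O => pick (O, O)
                            | S k => pick (S (phi k), S k) end).
  exists phi; split.
  { intros n; simpl; destruct (Hpick (S (phi n), S n)); simpl in *; lia. }
  exists l; intros eps He. destruct (archimed_cor1 eps He) as [N [HN1 HN2]].
  exists N; intros n Hn. unfold Rdist.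
  assert (Hn' : Rabs (u (phi n) - l) < / INR (S n)) by (destruct n; apply Hpick).
  eapply Rlt_le_trans; [exact Hn'|]. apply Rlt_le, Rle_lt_trans with (/ INR N); auto.
  apply Rinv_le_contravar; [apply lt_0_INR; lia|apply le_INR; lia].
Qed.

Section DiagonalExtraction.
Variables (F : nat -> nat -> R) (B : nat -> R).
Hypothesis F_bounded : forall i j, Rabs (F i j) <= B i.

Lemma refine_exists i (psi : nat -> nat) :
  exists th, strict_incr th /\ exists l, Un_cv (fun n => F i (psi (th n))) l.
Proof. apply (bounded_subseq_cv (fun n => F i (psi n)) (B i)); auto. Qed.

Definition refine i psi : nat -> nat :=
  proj1_sig (constructive_indefinite_description _ (refine_exists i psi)).

Lemma refine_spec i psi :
  strict_incr (refine i psi) /\ exists l, Un_cv (fun n => F i (psi (refine i psi n))) l.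
Proof. unfold refine; destruct (constructive_indefinite_description _ _); auto. Qed.

Fixpoint nested (k : nat) : nat -> nat :=
  match k with
  | O => fun n => n
  | S k => fun n => nested k (refine k (nested k) n)
  end.

Lemma nested_strict k : strict_incr (nested k).
Proof.
  induction k; simpl; [intros n; lia|].
  apply strict_incr_comp; [exact IHk|apply refine_spec].
Qed.

Lemma nested_factor k d : exists rho, (forall n, (n <= rho n)%nat) /\
  forall n, nested (k + d) n = nested k (rho n).
Proof.
  induction d as [|d [rho [Hrho E]]].
  - exists (fun n => n); split; [auto|]. intros n; now rewrite Nat.add_0_r.
  - set (th := refine (k + d) (nested (k + d))).
    exists (fun n => rho (th n)); split.
    + intros n. pose proof (strict_incr_ge _ (proj1 (refine_spec (k + d) (nested (k + d)))) n).
      specialize (Hrho (th n)); unfold th in *; lia.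
    + intros n; rewrite Nat.add_succ_r; apply E.
Qed.

(* The diagonal j |-> nested j j is eventually an extraction of every nested k. *)
Lemma diagonal_extraction :
  exists phi, strict_incr phi /\ forall i, exists l, Un_cv (fun j => F i (phi j)) l.
Proof.
  exists (fun j => nested j j); split.
  - intros j; simpl. apply strict_incr_lt; [apply nested_strict|].
    pose proof (strict_incr_ge _ (proj1 (refine_spec j (nested j))) (S j)); lia.
  - intros i. destruct (proj2 (refine_spec i (nested i))) as [l Hl]. exists l.
    intros eps He. destruct (Hl eps He) as [N HN]. exists (max N (S i)); intros j Hj.
    destruct (nested_factor (S i) (j - S i)) as [rho [Hrho E]].
    replace (nested j j) with (nested (S i) (rho j)) by (rewrite <- E; f_equal; lia).
    apply HN. specialize (Hrho j); lia.
Qed.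

End DiagonalExtraction.

Lemma countable_extraction (I : Type) (e : nat -> I) (F : I -> nat -> R) (B : I -> R) :
  (forall i, exists n, e n = i) -> (forall i j, Rabs (F i j) <= B i) ->
  exists phi, strict_incr phi /\ exists L : I -> R, forall i, Un_cv (fun j => F i (phi j)) (L i).
Proof.
  intros He HB.
  destruct (diagonal_extraction (fun n => F (e n)) (fun n => B (e n))) as [phi [Hphi Hcv]].
  { intros; apply HB. }
  exists phi; split; [exact Hphi|]. apply (choice (fun i l => Un_cv (fun j => F i (phi j)) l)).
  intros i; destruct (He i) as [n <-]; apply Hcv.
Qed.

Definition enum_nat_Z (n : nat) : nat * Z :=
  let (t, r) := Cantor.of_nat n in
  let (p, q) := Cantor.of_nat r in (t, (Z.of_nat p - Z.of_nat q)%Z).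

Lemma enum_nat_Z_surj i : exists n, enum_nat_Z n = i.
Proof.
  destruct i as [t z]. exists (Cantor.to_nat (t, Cantor.to_nat (Z.to_nat z, Z.to_nat (- z)))).
  unfold enum_nat_Z. rewrite !Cantor.cancel_of_to. f_equal; lia.
Qed.

Lemma sum_term_le (c : nat -> R) n i :
  (forall k, 0 <= c k) -> (i <= n)%nat -> c i <= sum_f_R0 c n.
Proof.
  intros Hc Hi. induction n as [|n IH].
  - replace i with 0%nat by lia. simpl; lra.
  - simpl. destruct (Nat.eq_dec i (S n)) as [->|Hne].
    + pose proof (cond_pos_sum c n Hc); lra.
    + pose proof (Hc (S n)); assert (c i <= sum_f_R0 c n) by (apply IH; lia); lra.
Qed.

Lemma sum_rev_le (c : nat -> R) : (forall k, 0 <= c k) ->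
  forall n L, (L <= n)%nat -> sum_f_R0 (fun k => c (n - k)%nat) L <= sum_f_R0 c n.
Proof.
  intros Hc n; induction n as [|n IH]; intros L HL.
  - replace L with 0%nat by lia. simpl; lra.
  - destruct L as [|L].
    + simpl. pose proof (cond_pos_sum c n Hc); lra.
    + rewrite decomp_sum by lia. simpl pred.
      change (sum_f_R0 (fun i => c (S n - S i)%nat) L) with (sum_f_R0 (fun i => c (n - i)%nat) L).
      cbv beta. rewrite Nat.sub_0_r.
      simpl sum_f_R0 at 2. pose proof (IH L ltac:(lia)); lra.
Qed.

Lemma multiples_bounded_nonpos c D : (forall L : nat, c * INR (S L) <= D) -> c <= 0.
Proof.
  intros H. apply Rnot_lt_le; intros Hc.
  destruct (INR_archimed c D Hc) as [n Hn]. specialize (H n).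
  rewrite S_INR in H. lra.
Qed.

Definition rsolves_at (ar br : Z -> R) (x0 : R) (f : Z -> R) (n : Z) : Prop :=
  ar n * f (n + 1)%Z + br n * f n + ar (n - 1)%Z * f (n - 1)%Z = x0 * f n.

Definition wronskian (ar : Z -> R) (f g : Z -> R) (n : Z) : R :=
  ar n * (f (n + 1)%Z * g n - g (n + 1)%Z * f n).

Section Wronskian.
Variables (ar br : Z -> R) (x0 : R).

Lemma wronskian_step f g n : rsolves_at ar br x0 f n -> rsolves_at ar br x0 g n ->
  wronskian ar f g (n - 1) = wronskian ar f g n.
Proof.
  unfold rsolves_at, wronskian; intros Ef Eg. replace (n - 1 + 1)%Z with n by ring.
  pose proof (f_equal (Rmult (f n)) Eg); pose proof (f_equal (Rmult (g n)) Ef); lra.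
Qed.

Lemma wronskian_const_down f g n0 :
  (forall n, (n <= n0)%Z -> rsolves_at ar br x0 f n /\ rsolves_at ar br x0 g n) ->
  forall k : nat, wronskian ar f g (n0 - Z.of_nat k) = wronskian ar f g n0.
Proof.
  intros Hs k; induction k as [|k IH]; [f_equal; lia|].
  rewrite <- IH. replace (n0 - Z.of_nat (S k))%Z with (n0 - Z.of_nat k - 1)%Z by lia.
  apply wronskian_step; apply Hs; lia.
Qed.

Lemma wronskian_sq_bound v h n CA M : Rabs (ar n) <= CA -> (forall m, Rabs (h m) <= M) ->
  wronskian ar v h n ^ 2 <= 2 * CA ^ 2 * M ^ 2 * (v (n + 1)%Z ^ 2 + v n ^ 2).
Proof.
  intros Ha Hh. unfold wronskian.
  set (v1 := v (n + 1)%Z); set (v0 := v n); set (h1 := h (n + 1)%Z); set (h0 := h n).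
  assert (Ea : ar n ^ 2 <= CA ^ 2) by (apply pow_maj_Rabs, Ha).
  assert (E0 : h0 ^ 2 <= M ^ 2) by (apply pow_maj_Rabs, Hh).
  assert (E1 : h1 ^ 2 <= M ^ 2) by (apply pow_maj_Rabs, Hh).
  assert (Ed : (v1 * h0 - h1 * v0) ^ 2 <= 2 * M ^ 2 * (v1 ^ 2 + v0 ^ 2)).
  { pose proof (pow2_ge_0 (v1 * h0 + h1 * v0)).
    pose proof (Rmult_le_compat_l _ _ _ (pow2_ge_0 v1) E0).
    pose proof (Rmult_le_compat_l _ _ _ (pow2_ge_0 v0) E1). nra. }
  replace ((ar n * (v1 * h0 - h1 * v0)) ^ 2) with (ar n ^ 2 * (v1 * h0 - h1 * v0) ^ 2) by ring.
  replace (2 * CA ^ 2 * M ^ 2 * (v1 ^ 2 + v0 ^ 2))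
    with (CA ^ 2 * (2 * M ^ 2 * (v1 ^ 2 + v0 ^ 2))) by ring.
  apply Rmult_le_compat; auto using pow2_ge_0.
Qed.

(* A solution square summable at -oo has zero Wronskian with any bounded
   solution: the Wronskian is constant on the left half-line, while its
   square is dominated by a summable sequence. *)
Lemma l2_tail_wronskian_zero v h CA M Sv :
  (forall n, Rabs (ar n) <= CA) -> (forall n, Rabs (h n) <= M) ->
  (forall n, (n <= -1)%Z -> rsolves_at ar br x0 v n /\ rsolves_at ar br x0 h n) ->
  (forall L : nat, sum_f_R0 (fun k => v (- Z.of_nat k)%Z ^ 2) L <= Sv) ->
  wronskian ar v h (-1) = 0.
Proof.
  intros Ha Hh Hs HS.
  set (C := 2 * CA ^ 2 * M ^ 2).
  assert (HC : 0 <= C) by (unfold C; pose proof (pow2_ge_0 CA); pose proof (pow2_ge_0 M); nra).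
  assert (Hlin : forall L : nat, wronskian ar v h (-1) ^ 2 * INR (S L) <= C * (Sv + Sv)).
  { intros L. rewrite <- sum_cte.
    apply Rle_trans with
      (sum_f_R0 (fun k => (v (- Z.of_nat k)%Z ^ 2 + v (- Z.of_nat (S k))%Z ^ 2) * C) L).
    - apply sum_Rle; intros k _. rewrite <- (wronskian_const_down v h (-1) Hs k), Rmult_comm.
      replace (- Z.of_nat k)%Z with (-1 - Z.of_nat k + 1)%Z by ring.
      replace (- Z.of_nat (S k))%Z with (-1 - Z.of_nat k)%Z by lia.
      apply wronskian_sq_bound; auto.
    - rewrite <- scal_sum, sum_plus. apply Rmult_le_compat_l; [exact HC|].
      assert (Eshift : sum_f_R0 (fun k => v (- Z.of_nat k)%Z ^ 2) (S L) =
                       v 0%Z ^ 2 + sum_f_R0 (fun k => v (- Z.of_nat (S k))%Z ^ 2) L)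
        by (rewrite decomp_sum by lia; reflexivity).
      pose proof (HS L); pose proof (HS (S L)); pose proof (pow2_ge_0 (v 0%Z)); lra. }
  pose proof (multiples_bounded_nonpos _ _ Hlin). nra.
Qed.

Lemma l2_tail_solution_vanishes f g v CA M Sv :
  (forall n, Rabs (ar n) <= CA) -> (forall n, Rabs (f n) <= M) -> (forall n, Rabs (g n) <= M) ->
  (forall n, (n <= 0)%Z -> rsolves_at ar br x0 f n /\ rsolves_at ar br x0 g n) ->
  (forall n, (n <= -1)%Z -> rsolves_at ar br x0 v n) ->
  (forall L : nat, sum_f_R0 (fun k => v (- Z.of_nat k)%Z ^ 2) L <= Sv) ->
  wronskian ar f g 0 <> 0 -> v 0%Z = 0.
Proof.
  intros Ha Hf Hg Hfg Hv HS Hw.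
  assert (Wvf : wronskian ar v f (-1) = 0).
  { apply (l2_tail_wronskian_zero v f CA M Sv); auto.
    intros n Hn; split; [apply Hv|apply Hfg]; lia. }
  assert (Wvg : wronskian ar v g (-1) = 0).
  { apply (l2_tail_wronskian_zero v g CA M Sv); auto.
    intros n Hn; split; [apply Hv|apply Hfg]; lia. }
  rewrite <- (wronskian_step f g 0) in Hw by (apply Hfg; lia).
  change (0 - 1)%Z with (-1)%Z in Hw. unfold wronskian in *. change (-1 + 1)%Z with 0%Z in *.
  (* W(f,g) v_0 = f_0 W(v,g) - g_0 W(v,f) at -1 *)
  apply (Rmult_eq_reg_l (ar (-1)%Z * (f 0%Z * g (-1)%Z - g 0%Z * f (-1)%Z))); [|exact Hw].
  pose proof (f_equal (Rmult (f 0%Z)) Wvg); pose proof (f_equal (Rmult (g 0%Z)) Wvf); lra.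
Qed.

End Wronskian.

Lemma Rabs_fst_le_Cmod z : Rabs (fst z) <= Cmod z.
Proof.
  unfold Cmod. rewrite <- sqrt_Rsqr_abs. apply sqrt_le_1_alt. unfold Rsqr; simpl.
  pose proof (pow2_ge_0 (snd z)); simpl in *; lra.
Qed.

Lemma Rabs_snd_le_Cmod z : Rabs (snd z) <= Cmod z.
Proof.
  unfold Cmod. rewrite <- sqrt_Rsqr_abs. apply sqrt_le_1_alt. unfold Rsqr; simpl.
  pose proof (pow2_ge_0 (fst z)); simpl in *; lra.
Qed.

(* u_1 conj(u_0) - conj(u_1) u_0 = -2i Im(u_1 conj(u_0)), whose modulus is
   twice the real Wronskian of the real and imaginary parts. *)
Lemma Cmod_Cwronskian z1 z0 :
  Cmod (Csub (Cmul z1 (Cconj z0)) (Cmul (Cconj z1) z0)) =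
  2 * Rabs (fst z1 * snd z0 - snd z1 * fst z0).
Proof.
  destruct z1 as [f1 g1], z0 as [f0 g0]. unfold Cmod, Csub, Cmul, Cconj; simpl.
  replace (_ + _) with (Rsqr (2 * (f1 * g0 - g1 * f0))) by (unfold Rsqr; ring).
  rewrite sqrt_Rsqr_abs, Rabs_mult, (Rabs_right 2) by lra. reflexivity.
Qed.

Lemma solves_parts ar br x0 u : solves ar br x0 u -> forall n,
  rsolves_at ar br x0 (fun m => fst (u m)) n /\ rsolves_at ar br x0 (fun m => snd (u m)) n.
Proof.
  intros Hs n; unfold rsolves_at; split;
    [pose proof (f_equal fst (Hs n)) as E|pose proof (f_equal snd (Hs n)) as E];
    unfold Cadd, Cscal in E; simpl in E; exact E.
Qed.

Lemma wronskian_parts_nonzero ar u delta : 0 < delta ->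
  delta <= ar 0%Z * Cmod (Csub (Cmul (u 1%Z) (Cconj (u 0%Z))) (Cmul (Cconj (u 1%Z)) (u 0%Z))) ->
  wronskian ar (fun m => fst (u m)) (fun m => snd (u m)) 0 <> 0.
Proof.
  rewrite Cmod_Cwronskian. unfold wronskian; change (0 + 1)%Z with 1%Z.
  intros Hd Hle E. apply Rmult_integral in E as [E|E]; rewrite E in Hle.
  - lra.
  - rewrite Rabs_R0 in Hle; lra.
Qed.

Lemma complex_solution_kills_l2_tail ar br x0 u v CA M delta :
  (forall n, Rabs (ar n) <= CA) -> solves ar br x0 u -> (forall n, Cmod (u n) <= M) ->
  0 < delta ->
  delta <= ar 0%Z * Cmod (Csub (Cmul (u 1%Z) (Cconj (u 0%Z))) (Cmul (Cconj (u 1%Z)) (u 0%Z))) ->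
  (forall n, (n <= -1)%Z -> rsolves_at ar br x0 v n) ->
  (forall L : nat, sum_f_R0 (fun k => v (- Z.of_nat k)%Z ^ 2) L <= 1) ->
  v 0%Z = 0.
Proof.
  intros Ha Hu HM Hdelta Hdel Hv HL.
  apply (l2_tail_solution_vanishes ar br x0 (fun n => fst (u n)) (fun n => snd (u n)) v CA M 1);
    auto.
  - intros n; eapply Rle_trans; [apply Rabs_fst_le_Cmod|apply HM].
  - intros n; eapply Rle_trans; [apply Rabs_snd_le_Cmod|apply HM].
  - intros n _; apply solves_parts, Hu.
  - exact (wronskian_parts_nonzero _ _ delta Hdelta Hdel).
Qed.

Definition shifted (s : nat -> R) (n : nat) (k : Z) : R := atZ s (Z.of_nat n + k).

Lemma sq_div_sqrt p s : 0 < s -> (p / sqrt s) ^ 2 = p ^ 2 / s.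
Proof.
  intros Hs. assert (Hq : 0 < sqrt s) by (apply sqrt_lt_R0; auto).
  replace ((p / sqrt s) ^ 2) with (p ^ 2 / (sqrt s * sqrt s)) by (field; lra).
  now rewrite sqrt_sqrt by lra.
Qed.

Section OrthonormalPolynomials.
Variables a b : nat -> R.

Lemma opoly_recurrence x m : a (m + 2)%nat <> 0 ->
  a (m + 2)%nat * opoly a b (m + 2) x + b (m + 2)%nat * opoly a b (m + 1) x
  + a (m + 1)%nat * opoly a b m x = x * opoly a b (m + 1) x.
Proof.
  intros Ha. unfold opoly.
  replace (m + 2)%nat with (S (S m)) in * by lia. replace (m + 1)%nat with (S m) by lia.
  simpl opoly_pair at 1. simpl fst.
  replace (S (S m)) with (m + 2)%nat in * by lia. replace (S m) with (m + 1)%nat by lia.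
  field; exact Ha.
Qed.

Lemma opoly_sq_le_CDkernel n x i : (i <= n)%nat -> opoly a b i x ^ 2 <= CDkernel a b n x.
Proof. intros Hi; apply (sum_term_le (fun j => opoly a b j x ^ 2)); auto using pow2_ge_0. Qed.

Lemma CDkernel_ge_1 n x : 1 <= CDkernel a b n x.
Proof.
  pose proof (opoly_sq_le_CDkernel n x 0 (Nat.le_0_l n)) as H.
  unfold opoly in H; simpl in H; lra.
Qed.

Definition profile (n : nat) (x : R) (k : Z) : R :=
  if Z.leb k 0 then opoly a b (Z.to_nat (Z.of_nat n + k)) x / sqrt (CDkernel a b n x) else 0.

Lemma profile_zero_sq n x : profile n x 0 ^ 2 = opoly a b n x ^ 2 / CDkernel a b n x.
Proof.
  unfold profile; simpl Z.leb; cbv iota. rewrite Z.add_0_r, Nat2Z.id.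
  apply sq_div_sqrt. pose proof (CDkernel_ge_1 n x); lra.
Qed.

Lemma profile_bound n x k : Rabs (profile n x k) <= 1.
Proof.
  unfold profile; destruct (Z.leb_spec k 0); [|rewrite Rabs_R0; lra].
  set (p := opoly a b _ x). set (s := CDkernel a b n x).
  assert (Hs : 1 <= s) by apply CDkernel_ge_1.
  assert (Hp : p ^ 2 <= s) by (apply opoly_sq_le_CDkernel; lia).
  rewrite <- Rabs_R1. apply Rsqr_le_abs_0. unfold Rsqr.
  replace (p / sqrt s * (p / sqrt s)) with ((p / sqrt s) ^ 2) by ring.
  rewrite sq_div_sqrt by lra. apply Rmult_le_reg_r with s; [lra|].
  unfold Rdiv; rewrite Rmult_assoc, Rinv_l by lra. lra.
Qed.

(* The profile solves the recurrence with the shifted coefficients at n + 1,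
   as long as the three indices involved are nonnegative. *)
Lemma profile_rsolves n x k : (forall i, (1 <= i)%nat -> a i <> 0) ->
  (k <= -1)%Z -> (1 - k <= Z.of_nat n)%Z ->
  rsolves_at (shifted a (S n)) (shifted b (S n)) x (profile n x) k.
Proof.
  intros Ha Hk Hn. unfold rsolves_at, profile, shifted, atZ.
  rewrite (proj2 (Z.leb_le (k + 1) 0)), (proj2 (Z.leb_le k 0)), (proj2 (Z.leb_le (k - 1) 0))
    by lia.
  set (m := Z.to_nat (Z.of_nat n + k - 1)).
  replace (Z.to_nat (Z.of_nat (S n) + k)) with (m + 2)%nat by lia.
  replace (Z.to_nat (Z.of_nat (S n) + (k - 1))) with (m + 1)%nat by lia.
  replace (Z.to_nat (Z.of_nat n + (k + 1))) with (m + 2)%nat by lia.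
  replace (Z.to_nat (Z.of_nat n + k)) with (m + 1)%nat by lia.
  replace (Z.to_nat (Z.of_nat n + (k - 1))) with m by lia.
  replace (x * (opoly a b (m + 1) x / sqrt (CDkernel a b n x)))
    with (x * opoly a b (m + 1) x / sqrt (CDkernel a b n x)) by (unfold Rdiv; ring).
  rewrite <- opoly_recurrence by (apply Ha; lia). unfold Rdiv; ring.
Qed.

Lemma profile_sum n x L : (L <= n)%nat ->
  sum_f_R0 (fun k => profile n x (- Z.of_nat k)%Z ^ 2) L <= 1.
Proof.
  intros HL. set (s := CDkernel a b n x).
  assert (Hs : 0 < s) by (pose proof (CDkernel_ge_1 n x); unfold s; lra).
  rewrite (sum_eq _ (fun k => opoly a b (n - k)%nat x ^ 2 * / s)).
  - rewrite <- scal_sum. apply Rmult_le_reg_l with s; [exact Hs|].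
    rewrite <- Rmult_assoc, Rinv_r, Rmult_1_l, Rmult_1_r by lra.
    apply (sum_rev_le (fun i => opoly a b i x ^ 2)); auto using pow2_ge_0.
  - intros k Hk. unfold profile. rewrite (proj2 (Z.leb_le (- Z.of_nat k) 0)) by lia.
    replace (Z.to_nat (Z.of_nat n + - Z.of_nat k)) with (n - k)%nat by lia.
    now rewrite sq_div_sqrt.
Qed.

End OrthonormalPolynomials.

Lemma cv_rsolves_at (arj brj fj : nat -> Z -> R) (xj : nat -> R) ar br x0 f n N :
  (forall k, Un_cv (fun j => arj j k) (ar k)) -> (forall k, Un_cv (fun j => brj j k) (br k)) ->
  Un_cv xj x0 -> (forall k, Un_cv (fun j => fj j k) (f k)) ->
  (forall j, (N <= j)%nat -> rsolves_at (arj j) (brj j) (xj j) (fj j) n) ->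
  rsolves_at ar br x0 f n.
Proof.
  intros Ha Hb Hx Hf Hs. unfold rsolves_at.
  apply (cv_unique_eventually _ _ _ _ N (CV_plus _ _ _ _ (CV_plus _ _ _ _
           (CV_mult _ _ _ _ (Ha n) (Hf (n + 1)%Z)) (CV_mult _ _ _ _ (Hb n) (Hf n)))
           (CV_mult _ _ _ _ (Ha (n - 1)%Z) (Hf (n - 1)%Z)))
         (CV_mult _ _ _ _ Hx (Hf n)) Hs).
Qed.

Lemma cv_partial_sum_sq_le (fj : nat -> Z -> R) f L Sv N :
  (forall k, Un_cv (fun j => fj j k) (f k)) ->
  (forall j, (N <= j)%nat -> sum_f_R0 (fun k => fj j (- Z.of_nat k)%Z ^ 2) L <= Sv) ->
  sum_f_R0 (fun k => f (- Z.of_nat k)%Z ^ 2) L <= Sv.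
Proof.
  intros Hf HN. apply (cv_le_eventually _ _ _ N (cv_sum (fun k j => fj j (- Z.of_nat k)%Z ^ 2)
    (fun k => f (- Z.of_nat k)%Z ^ 2) L (fun k => cv_sq _ _ (Hf (- Z.of_nat k)%Z)))), HN.
Qed.

Lemma profile_limit a b (nj : nat -> nat) (xj : nat -> R) ar br x0 v :
  (forall i, (1 <= i)%nat -> a i <> 0) -> (forall j, (j <= nj j)%nat) -> Un_cv xj x0 ->
  (forall k, Un_cv (fun j => shifted a (S (nj j)) k) (ar k)) ->
  (forall k, Un_cv (fun j => shifted b (S (nj j)) k) (br k)) ->
  (forall k, Un_cv (fun j => profile a b (nj j) (xj j) k) (v k)) ->
  (forall n, (n <= -1)%Z -> rsolves_at ar br x0 v n) /\
  (forall L : nat, sum_f_R0 (fun k => v (- Z.of_nat k)%Z ^ 2) L <= 1).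
Proof.
  intros Ha Hnj Hx Har Hbr Hv; split.
  - intros n Hn. apply (cv_rsolves_at _ _ _ _ _ _ _ _ n (Z.to_nat (1 - n)) Har Hbr Hx Hv).
    intros j Hj. apply profile_rsolves; auto. specialize (Hnj j); lia.
  - intros L. apply (cv_partial_sum_sq_le _ _ L 1 L Hv).
    intros j Hj. apply profile_sum. specialize (Hnj j); lia.
Qed.

Lemma profile_limit_at_zero a b (nj : nat -> nat) (xj : nat -> R) v eps :
  (forall k, Un_cv (fun j => profile a b (nj j) (xj j) k) (v k)) ->
  (forall j, eps < opoly a b (nj j) (xj j) ^ 2 / CDkernel a b (nj j) (xj j)) ->
  eps <= v 0%Z ^ 2.
Proof.
  intros Hv Heps.
  apply (Rle_cv_lim (Un := fun _ => eps) (Vn := fun j => profile a b (nj j) (xj j) 0 ^ 2));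
    [|apply cv_const|apply cv_sq, Hv].
  intros j; rewrite profile_zero_sq; apply Rlt_le, Heps.
Qed.

(* The data attached to (n, x), as a family indexed by nat * Z: tag 0 is x,
   tags 1 and 2 the shifted coefficients a and b, other tags the profile. *)
Definition jacobi_data (a b : nat -> R) (n : nat) (x : R) (i : nat * Z) : R :=
  match fst i with
  | O => x
  | 1%nat => shifted a (S n) (snd i)
  | 2%nat => shifted b (S n) (snd i)
  | _ => profile a b n x (snd i)
  end.

Lemma jacobi_extraction a b (nj : nat -> nat) (xj : nat -> R) CA CB X :
  (forall i, Rabs (a i) <= CA) -> (forall i, Rabs (b i) <= CB) -> (forall j, Rabs (xj j) <= X) ->
  exists (psi : nat -> nat) (ar br : Z -> R) (x0 : R) (v : Z -> R),
    (forall j, (j <= psi j)%nat) /\ Un_cv (fun j => xj (psi j)) x0 /\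
    (forall k, Un_cv (fun j => shifted a (S (nj (psi j))) k) (ar k)) /\
    (forall k, Un_cv (fun j => shifted b (S (nj (psi j))) k) (br k)) /\
    (forall k, Un_cv (fun j => profile a b (nj (psi j)) (xj (psi j)) k) (v k)).
Proof.
  intros Ha Hb Hx.
  assert (HCA : 0 <= CA) by (pose proof (Ha 0%nat); pose proof (Rabs_pos (a 0%nat)); lra).
  assert (HCB : 0 <= CB) by (pose proof (Hb 0%nat); pose proof (Rabs_pos (b 0%nat)); lra).
  assert (HX : 0 <= X) by (pose proof (Hx 0%nat); pose proof (Rabs_pos (xj 0%nat)); lra).
  destruct (countable_extraction (nat * Z) enum_nat_Z
              (fun i j => jacobi_data a b (nj j) (xj j) i) (fun _ => X + CA + CB + 1))
    as [psi [Hpsi [L HL]]]; [apply enum_nat_Z_surj| |].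
  - intros [t k] j; unfold jacobi_data; simpl.
    destruct t as [|[|[|t]]]; [pose proof (Hx j)|pose proof (Ha (Z.to_nat (Z.of_nat (S (nj j)) + k)))
      |pose proof (Hb (Z.to_nat (Z.of_nat (S (nj j)) + k)))|pose proof (profile_bound a b (nj j) (xj j) k)];
      unfold shifted, atZ; lra.
  - exists psi, (fun k => L (1%nat, k)), (fun k => L (2%nat, k)), (L (0%nat, 0%Z)),
      (fun k => L (3%nat, k)).
    split; [apply strict_incr_ge, Hpsi|].
    split; [exact (HL (0%nat, 0%Z))|].
    split; [intros k; exact (HL (1%nat, k))|].
    split; [intros k; exact (HL (2%nat, k))|].
    intros k; exact (HL (3%nat, k)).
Qed.

Lemma shifts_right_limit a b (m : nat -> nat) ar br : (forall j, (j <= m j)%nat) ->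
  (forall k, Un_cv (fun j => shifted a (m j) k) (ar k)) ->
  (forall k, Un_cv (fun j => shifted b (m j) k) (br k)) ->
  is_right_limit a b ar br.
Proof.
  intros Hm Ha Hb. exists m; split; [|intros n; split; [apply Ha|apply Hb]].
  intros M; exists M; intros j Hj; specialize (Hm j); lia.
Qed.

Lemma bounded_from_one (s : nat -> R) C : (forall n, (1 <= n)%nat -> Rabs (s n) <= C) ->
  exists C', forall n, Rabs (s n) <= C'.
Proof.
  intros H. exists (C + Rabs (s 0%nat)); intros [|n].
  - pose proof (H 1%nat (le_n 1)); pose proof (Rabs_pos (s 1%nat)); lra.
  - pose proof (H (S n) ltac:(lia)); pose proof (Rabs_pos (s 0%nat)); lra.
Qed.

Lemma compact_abs_bounded K : compact K -> exists X, forall x, K x -> Rabs x <= X.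
Proof.
  intros HK. destruct (compact_P1 K HK) as [mK [MK HmK]]. exists (Rabs mK + Rabs MK).
  intros x Kx; destruct (HmK x Kx). apply Rabs_le.
  pose proof (Rle_abs mK); pose proof (Rle_abs MK);
  pose proof (Rle_abs (- mK)); pose proof (Rle_abs (- MK)); rewrite !Rabs_Ropp in *; lra.
Qed.

Lemma compact_seq_limit K (x : nat -> R) l : compact K -> (forall j, K (x j)) -> Un_cv x l -> K l.
Proof.
  intros HK Hx Hl. apply NNPP; intros Hn.
  destruct (compact_P2 K HK l Hn) as [del Hdel].
  destruct (Hl del (cond_pos del)) as [N HN].
  apply (Hdel (x N)); [apply HN; lia|apply Hx].
Qed.

Lemma failure_witnesses (P : nat -> R -> Prop) :
  ~ (exists N, forall n, (N <= n)%nat -> forall x, P n x) ->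
  exists (nj : nat -> nat) (xj : nat -> R), (forall j, (j <= nj j)%nat) /\ forall j, ~ P (nj j) (xj j).
Proof.
  intros Hno.
  assert (Hex : forall N, exists p : nat * R, (N <= fst p)%nat /\ ~ P (fst p) (snd p)).
  { intros N. apply NNPP; intros H. apply Hno. exists N; intros n Hn x.
    apply NNPP; intros Hp. apply H. now exists (n, x). }
  destruct (choice _ Hex) as [p Hp].
  exists (fun j => fst (p j)), (fun j => snd (p j)); split; intros j; apply Hp.
Qed.

Theorem proposition7p2
  (a b : nat -> R) (K : R -> Prop)
  (Ha : exists c Cst : R, 0 < c /\ forall n : nat, (1 <= n)%nat -> c <= a n <= Cst)
  (Hb : exists B : R, forall n : nat, (1 <= n)%nat -> Rabs (b n) <= B)
  (HK : compact K)
  (U : (Z -> R) -> (Z -> R) -> R -> Z -> Cx)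
  (Hsol : forall ar br x0, is_right_limit a b ar br -> K x0 -> solves ar br x0 (U ar br x0))
  (Hi : exists M : R, forall ar br x0 (n : Z),
          is_right_limit a b ar br -> K x0 -> Cmod (U ar br x0 n) <= M)
  (Hii : exists delta : R, 0 < delta /\ forall ar br x0,
          is_right_limit a b ar br -> K x0 ->
          delta <= ar 0%Z * Cmod (Csub (Cmul (U ar br x0 1%Z) (Cconj (U ar br x0 0%Z)))
                                       (Cmul (Cconj (U ar br x0 1%Z)) (U ar br x0 0%Z)))) :
  forall eps : R, 0 < eps -> exists N : nat, forall n : nat, (N <= n)%nat ->
    forall x0 : R, K x0 -> opoly a b n x0 ^ 2 / CDkernel a b n x0 <= eps.
Proof.
  intros eps Heps.
  destruct Ha as [c [Cst [Hc HaB]]]. destruct Hb as [Bb HbB].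
  destruct Hi as [M HM]. destruct Hii as [delta [Hdelta Hdel]].
  assert (Ha0 : forall i, (1 <= i)%nat -> a i <> 0) by (intros i Hi; destruct (HaB i Hi); lra).
  destruct (bounded_from_one a Cst) as [CA HCA].
  { intros n Hn; destruct (HaB n Hn); apply Rabs_le; lra. }
  destruct (bounded_from_one b Bb HbB) as [CB HCB].
  destruct (compact_abs_bounded K HK) as [X HX].
  apply NNPP; intros Hfail.
  destruct (failure_witnesses _ Hfail) as [nj [xj [Hnj Hbad]]].
  assert (Hxj : forall j, K (xj j) /\ eps < opoly a b (nj j) (xj j) ^ 2 / CDkernel a b (nj j) (xj j)).
  { intros j; destruct (imply_to_and _ _ (Hbad j)); split; [|apply Rnot_le_lt]; auto. }
  destruct (jacobi_extraction a b nj xj CA CB X HCA HCB (fun j => HX _ (proj1 (Hxj j))))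
    as (psi & ar & br & x0 & v & Hpsi & Hx & Har & Hbr & Hv).
  assert (Hm : forall j, (j <= nj (psi j))%nat) by (intros j; specialize (Hnj (psi j)); specialize (Hpsi j); lia).
  assert (Kx0 : K x0) by exact (compact_seq_limit K _ _ HK (fun j => proj1 (Hxj (psi j))) Hx).
  assert (Hrl : is_right_limit a b ar br) by (apply (shifts_right_limit a b (fun j => S (nj (psi j)))); auto).
  destruct (profile_limit a b _ _ ar br x0 v Ha0 Hm Hx Har Hbr Hv) as [Hvsol Hvl2].
  pose proof (profile_limit_at_zero a b _ _ v eps Hv (fun j => proj2 (Hxj (psi j)))) as Hv0.
  assert (Hzero : v 0%Z = 0).
  { apply (complex_solution_kills_l2_tail ar br x0 (U ar br x0) v CA M delta); auto.
    intros n; apply (cv_abs_le _ _ _ (Har n)); intros j; apply HCA. }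
  rewrite Hzero in Hv0. lra.
Qed.
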